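(* Let $\mathcal C$ be a $\Delta$-complex labeled over $B(X,P)$, let $C$ be a $k$-cell of $\mathcal C$ with $k\ge2$ and characteristic map $\sigma\colon\Delta^k\to\mathcal C$. Let $q$ be any closed path in the $1$-skeleton of $\Delta^k$ based at $v_0$ (a sequence of edges of $\Delta^k$, each traversed in either direction), and let $p=\sigma(q)$ be its image, a path of $1$-cells and inverses of $1$-cells in $\mathcal C$. Then $\ell(C)\le\ell(p)$ in $M(X,P)$ with respect to the natural partial order.
   Context: A $\Delta$-complex is a CW-complex in which each $k$-cell $c$ has a distinguished characteristic map $\sigma_c\colon\Delta^k\to\mathcal C$, $\Delta^k=[v_0,\dots,v_k]$ the standard simplex with ordered vertices, such that the restriction of $\sigma_c$ to each $(k-1)$-face (identified order-preservingly with $\Delta^{k-1}$) is the distinguished characteristic map of a $(k-1)$-cell; each edge $[v_i,v_j]$, $i<j$, is directed from $v_i$ to $v_j$, and a $1$-cell $e$ is directed from $\sigma_e(v_0)$ to $\sigma_e(v_1)$; traversing it backwards is written $e^{-1}$. An immersion is a continuous map that is a local homeomorphism onto its image and commutes with characteristic maps (each $k$-cell $d$ maps onto a $k$-cell with $f\circ\sigma_d=\sigma_{f(d)}$). $B(X,P)$ is a $\Delta$-complex with one $0$-cell, $1$-cells indexed by $X$, $k$-cells ($2\le k\le n$) indexed by $P_k$, index sets pairwise disjoint, $P=\bigcup P_k$. $\mathcal C$ is labeled over $B(X,P)$ via an immersion $f_{\mathcal C}\colon\mathcal C\to B(X,P)$; $\ell(c)$ is the index of $f_{\mathcal C}(c)$,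 $\ell(e^{-1})=\ell(e)^{-1}$, and the label of a path is the concatenation of labels, read in $M(X,P)$. Boundary labels: for a $k$-cell $c$ ($k\ge2$) with characteristic map $\sigma$, let $c_i$ be the $(k-1)$-cell whose characteristic map is $\sigma$ restricted to the face omitting $v_i$, and $e(c)=\sigma([v_0,v_1])$; $bl(c)=\ell(\sigma[v_0,v_1])\ell(\sigma[v_1,v_2])\ell(\sigma[v_0,v_2])^{-1}$ if $k=2$, and $bl(c)=\ell(c_k)\cdots\ell(c_1)\ell(e(c))\ell(c_0)\ell(e(c))^{-1}$ if $k\ge3$; $bl(\rho)$ for $\rho\in P$ is the boundary label of the cell of $B(X,P)$ labeled $\rho$. $M(X,P)$ is the inverse monoid presented by generators $X\cup P$ and relations $\rho^2=\rho$ and $\rho=\rho\,bl(\rho)$ for all $\rho\in P$. The natural partial order on an inverse monoid: $a\le b$ iff $a=eb$ for some idempotent $e$. *)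

From mathcomp Require Import all_boot.
Set Implicit Arguments. Unset Strict Implicit. Unset Printing Implicit Defensive.

(** Delta-complexes, combinatorially: semi-simplicial sets.
    [cell S k] = the k-cells; [face S k i c] = c_i, the (k)-cell whose
    characteristic map is that of the (k+1)-cell c restricted to the face
    omitting v_i (identified order-preservingly).  The simplicial identities
    d_i d_j = d_{j-1} d_i (i < j) express that these restrictions are
    coherent.  (Only indices i <= k+1 are meaningful.) *)
Record ssset := SSSet {
  cell : nat -> Type;
  face : forall k : nat, nat -> cell k.+1 -> cell k;
  face_face : forall (k : nat) (c : cell k.+2) (i j : nat), i < j -> j <= k.+2 ->
     @face k i (@face k.+1 j c) = @face k j.-1 (@face k.+1 i c)
}.
Arguments face s k _ _ : clear implicits.

(** vertex sigma(v_i) of a k-cell *)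
Fixpoint vtx (S : ssset) (k : nat) : cell S k -> nat -> cell S 0 :=
  match k return cell S k -> nat -> cell S 0 with
  | 0 => fun c _ => c
  | k'.+1 => fun c i =>
      if i < k'.+1 then vtx (face S k' k'.+1 c) i
      else vtx (face S k' 0 c) i.-1
  end.

(** [edge S k c i j] (for i < j <= k+1) = sigma([v_i, v_j]), the 1-cell obtained
    by restricting the characteristic map of the (k+1)-cell c to the edge
    [v_i, v_j]. *)
Fixpoint edge (S : ssset) (k : nat) : cell S k.+1 -> nat -> nat -> cell S 1 :=
  match k return cell S k.+1 -> nat -> nat -> cell S 1 with
  | 0 => fun c _ _ => c
  | k'.+1 => fun c i j =>
      if j < k'.+2 then edge (face S k'.+1 k'.+2 c) i j
      else if 0 < i then edge (face S k'.+1 0 c) i.-1 j.-1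
      else edge (face S k'.+1 1 c) 0 j.-1
  end.

Record ssmap (C B : ssset) := SSMap {
  smap : forall k : nat, cell C k -> cell B k;
  smap_face : forall (k : nat) (c : cell C k.+1) (i : nat), i <= k.+1 ->
     smap (face C k i c) = face B k i (smap c)
}.

Definition immersion (C B : ssset) (f : ssmap C B) : Prop :=
  forall (k : nat) (c c' : cell C k) (i : nat), i <= k ->
    vtx c i = vtx c' i -> smap f c = smap f c' -> c = c'.

(** Generators X u P of M(X,P): the cells of B(X,P) of dimension >= 1.
    [Gen 0 x] : x in X ; [Gen k.+1 rho] : rho in P_{k+2}. *)
Inductive gen (B : ssset) : Type := Gen (k : nat) (c : cell B k.+1).
Arguments Gen {B} k c.

(** words over generators and formal inverses ([true] = inverted) *)
Definition word (B : ssset) := seq (gen B * bool).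

Definition winv (B : ssset) (w : word B) : word B :=
  rev (map (fun x => (x.1, ~~ x.2)) w).

Definition bl (B : ssset) (k : nat) : cell B k.+1 -> word B :=
  match k return cell B k.+1 -> word B with
  | 0 => fun _ => [::]
  | 1 => fun c =>
      [:: (Gen 0 (edge c 0 1), false); (Gen 0 (edge c 1 2), false);
          (Gen 0 (edge c 0 2), true)]
  | k'.+2 => fun c =>
      [seq (Gen k'.+1 (face B k'.+2 i c), false) | i <- rev (iota 1 k'.+3)]
      ++ [:: (Gen 0 (edge c 0 1), false); (Gen k'.+1 (face B k'.+2 0 c), false);
             (Gen 0 (edge c 0 1), true)]
  end.

(** The congruence on words presenting the inverse monoid M(X,P):
    the Wagner congruence (inverse monoid axioms) together with the
    relations rho^2 = rho and rho = rho bl(rho) for rho in P. *)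
Inductive Meq (B : ssset) : word B -> word B -> Prop :=
| Meq_refl w : Meq w w
| Meq_sym u v : Meq u v -> Meq v u
| Meq_trans u v w : Meq u v -> Meq v w -> Meq u w
| Meq_cat u u' v v' : Meq u u' -> Meq v v' -> Meq (u ++ v) (u' ++ v')
| Meq_inv1 w : Meq (w ++ winv w ++ w) w
| Meq_inv2 u v : Meq (u ++ winv u ++ v ++ winv v) (v ++ winv v ++ u ++ winv u)
| Meq_idem k (c : cell B k.+2) :
    Meq [:: (Gen k.+1 c, false); (Gen k.+1 c, false)] [:: (Gen k.+1 c, false)]
| Meq_bl k (c : cell B k.+2) :
    Meq [:: (Gen k.+1 c, false)] ((Gen k.+1 c, false) :: bl c).

Definition leM (B : ssset) (u v : word B) : Prop :=
  exists e : word B, Meq (e ++ e) e /\ Meq u (e ++ v).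

(** closed path in the 1-skeleton of Delta^d based at v_0, given by its
    successive vertices after v_0 (consecutive vertices distinct). *)
Definition closed_path (d : nat) (q : seq nat) : bool :=
  path (fun a b => (a != b) && (b <= d)) 0 q && (last 0 q == 0).

Definition step_word (C B : ssset) (f : ssmap C B) (k : nat) (c : cell C k.+1)
  (a b : nat) : word B :=
  if a < b then [:: (Gen 0 (smap f (edge c a b)), false)]
  else [:: (Gen 0 (smap f (edge c b a)), true)].

Definition path_word (C B : ssset) (f : ssmap C B) (k : nat) (c : cell C k.+1)
  (q : seq nat) : word B :=
  flatten (pairmap (step_word f c) 0 q).

Definition cell_word (C B : ssset) (f : ssmap C B) (k : nat) (c : cell C k.+2)
  : word B := [:: (Gen k.+1 (smap f c), false)].

(** Every cell label is an idempotent lying below its boundary label, hence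
    below the label of each of its faces and, by induction on the dimension,
    below the label [g_a e_ab g_b^-1] of each triangle [v_0 v_a v_b] of the
    simplex (with [g_v] the label of the edge [v_0 v_v]).  Writing a closed
    path [v_0 = x_0, x_1, ..., x_n = v_0] as the product of the triangles
    [g_(x_i) e_(x_i x_(i+1)) g_(x_(i+1))^-1], whose interior factors
    [g^-1 g] are idempotents that can be dropped, and using that an
    idempotent below each factor of a product is below the product, gives
    the theorem. *)
From mathcomp Require Import all_boot zify.
From Stdlib Require Import Setoid Morphisms.
Set Implicit Arguments. Unset Strict Implicit.

Lemma unbumpE h x : unbump h x = if h < x then x.-1 else x.
Proof. by rewrite /unbump; case: (h < x); rewrite ?subn1 ?subn0. Qed.

Ltac arith := rewrite ?unbumpE; repeat match goal with
  |- context [if ?b then _ else _] =>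
     lazymatch b with context [if _ then _ else _] => fail | _ => case: (boolP b) => ? end
  end; lia.

Section Edges.
Variable S : ssset.

Lemma edgeS k (c : cell S k.+2) a b : edge c a b =
  if b < k.+2 then edge (face S k.+1 k.+2 c) a b
  else if 0 < a then edge (face S k.+1 0 c) a.-1 b.-1
  else edge (face S k.+1 1 c) 0 b.-1.
Proof. by []. Qed.

Lemma edge_some_face k (c : cell S k.+2) a b : a < b -> b <= k.+2 ->
  exists2 j, [/\ j <= k.+2, j != a & j != b] &
    edge c a b = edge (face S k.+1 j c) (unbump j a) (unbump j b).
Proof.
move=> ltab leb; rewrite edgeS; case: ifP => hb; last case: ifP => ha.
- by exists k.+2; [split; lia | congr edge; arith].
- by exists 0; [split; lia | congr edge; arith].
- by exists 1; [split; lia | congr edge; arith].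
Qed.

(* The simplicial identities make the restriction to [v_a v_b] independent
   of the face through which it is computed. *)
Lemma edge_face k (c : cell S k.+2) j a b : a < b -> b <= k.+2 -> j <= k.+2 ->
  j != a -> j != b ->
  edge c a b = edge (face S k.+1 j c) (unbump j a) (unbump j b).
Proof.
elim: k c j a b => [|k IH] c j a b ltab leb lej nja njb;
  have [i [lei nia nib] ->] := edge_some_face c ltab leb.
  by have -> : i = j by lia.
have edge_faces_eq h l : h < l -> l <= k.+3 -> h != a -> h != b -> l != a -> l != b ->
    edge (face S k.+2 h c) (unbump h a) (unbump h b) =
    edge (face S k.+2 l c) (unbump l a) (unbump l b).
  move=> lthl lel nha nhb nla nlb.
  rewrite (IH (face S k.+2 l c) h) ?(IH (face S k.+2 h c) l.-1); try arith.
  by rewrite (face_face c lthl lel); congr edge; arith.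
by case: (ltngtP i j) => [hij|hji|->] //; [|symmetry]; apply: edge_faces_eq.
Qed.

End Edges.

Lemma smap_edge (C B : ssset) (f : ssmap C B) k (c : cell C k.+1) a b :
  smap f (edge c a b) = edge (smap f c) a b.
Proof.
elim: k c a b => [|k IH] c a b //.
by rewrite !edgeS; case: ifP => _; last case: ifP => _; rewrite IH smap_face.
Qed.

Section InverseMonoid.
Variable B : ssset.
Notation W := (word B).

Lemma winv_cat (u v : W) : winv (u ++ v) = winv v ++ winv u.
Proof. by rewrite /winv map_cat rev_cat. Qed.

Lemma winvK : involutive (@winv B).
Proof.
move=> u; rewrite /winv map_rev revK -map_comp -[RHS]map_id.
by apply: eq_map => -[x b] /=; rewrite negbK.
Qed.

#[export] Instance Meq_Equivalence : Equivalence (@Meq B).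
Proof. split; [exact: Meq_refl | exact: Meq_sym | exact: Meq_trans]. Qed.

#[export] Instance cat_Meq_Proper : Proper (@Meq B ==> @Meq B ==> @Meq B) cat.
Proof. by move=> u u' eu v v' ev; apply: Meq_cat. Qed.

Definition idem (e : W) := Meq (e ++ e) e.

Lemma idem_nil : idem [::].
Proof. exact: Meq_refl. Qed.

Lemma idem_winv e : idem e -> Meq (winv e) e.
Proof.
move=> ide.
have winv_e : Meq (winv e) (e ++ winv e ++ winv e ++ e).
  transitivity (winv e ++ (e ++ e) ++ winv e).
    by rewrite ide; symmetry; have := Meq_inv1 (winv e); rewrite winvK.
  by have := Meq_inv2 (winv e) e; rewrite winvK -!catA.
transitivity (e ++ winv e ++ e); last exact: Meq_inv1.
by rewrite {2}winv_e !catA ide -!catA ide.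
Qed.

Lemma idem_catV (u : W) : idem (u ++ winv u).
Proof. by rewrite /idem -catA (catA (winv u)) catA Meq_inv1; reflexivity. Qed.

Lemma idem_Vcat (u : W) : idem (winv u ++ u).
Proof. by have := idem_catV (winv u); rewrite winvK. Qed.

Lemma idem_comm (e f : W) : idem e -> idem f -> Meq (e ++ f) (f ++ e).
Proof.
move=> ide idf; have Ee : Meq e (e ++ winv e) by rewrite (idem_winv ide) ide; reflexivity.
have Ef : Meq f (f ++ winv f) by rewrite (idem_winv idf) idf; reflexivity.
by rewrite {1}Ee {1}Ef -catA Meq_inv2 -Ee catA -Ef; reflexivity.
Qed.

Lemma idem_cat (e f : W) : idem e -> idem f -> idem (e ++ f).
Proof.
move=> ide idf; rewrite /idem -catA (catA f) -(idem_comm ide idf).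
by rewrite -catA idf catA ide; reflexivity.
Qed.

Lemma idem_conj (x f : W) : idem f -> idem (x ++ f ++ winv x).
Proof.
move=> idf; have comm_f : Meq (f ++ winv x ++ x) (winv x ++ x ++ f).
  by rewrite (idem_comm idf (idem_Vcat x)) -catA; reflexivity.
rewrite /idem -!catA (catA (winv x) x) (catA f) comm_f -!catA (catA f f) idf.
by rewrite (catA (winv x) x) (catA x) Meq_inv1; reflexivity.
Qed.

(* [rho = rho bl(rho)] forces [rho^-1 = bl(rho)^-1 rho^-1], so the relation
   set is closed under [winv] as well. *)
Lemma idem_absorb_winv e s : idem e -> Meq e (e ++ s) -> Meq (winv e) (winv s ++ winv e).
Proof.
move=> ide es; rewrite (idem_winv ide).
set x := winv s ++ e.
have ex : Meq (e ++ x) e.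
  by have := Meq_inv1 (e ++ s); rewrite winv_cat -es (idem_winv ide) -!catA ide.
have xe : Meq (x ++ e) x by rewrite /x -catA ide; reflexivity.
have winv_x : Meq (winv x) e by rewrite /x winv_cat winvK (idem_winv ide) -es; reflexivity.
clearbody x.
have xV : Meq (x ++ winv x) x by rewrite winv_x.
have eV : Meq (e ++ winv e) e by rewrite (idem_winv ide).
have comm_xe : Meq (x ++ e) (e ++ x).
  by rewrite -{1}xV -{1}eV -!catA Meq_inv2 !catA -catA xV eV; reflexivity.
by rewrite -{1}ex -comm_xe xe; reflexivity.
Qed.

Lemma Meq_winv (u v : W) : Meq u v -> Meq (winv u) (winv v).
Proof.
elim=> {u v} [w | u v _ IH | u v w _ IH1 _ IH2 | u u' v v' _ IH1 _ IH2
  | w | u v | k c | k c].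
- by reflexivity.
- by symmetry.
- by rewrite IH1.
- by rewrite !winv_cat IH1 IH2; reflexivity.
- by rewrite !winv_cat -catA; have := Meq_inv1 (winv w); rewrite winvK.
- by rewrite !winv_cat !winvK -!catA; apply: Meq_inv2.
- have idc : idem [:: (Gen k.+1 c, false)] by apply: Meq_idem.
  by rewrite (idem_winv (idem_cat idc idc) : Meq (winv [:: _; _]) _) (idem_winv idc).
- by have := @idem_absorb_winv [:: _] _ (Meq_idem c) (Meq_bl c); rewrite -winv_cat.
Qed.

#[export] Instance winv_Meq_Proper : Proper (@Meq B ==> @Meq B) (@winv B).
Proof. by move=> u v; apply: Meq_winv. Qed.

Lemma idem_map_gen (g : nat -> gen B) (l : seq nat) :
  (forall j, idem [:: (g j, false)]) -> idem [seq (g j, false) | j <- l].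
Proof.
by move=> idg; elim: l => [|j l IH] /=; [exact: idem_nil | apply: (idem_cat (idg j))].
Qed.

Lemma leM_refl (u : W) : leM u u.
Proof. by exists [::]; split; [exact: idem_nil | reflexivity]. Qed.

Lemma leM_Meq (u u' v v' : W) : Meq u u' -> Meq v v' -> leM u v -> leM u' v'.
Proof. by move=> eu ev [e [ide uev]]; exists e; split; rewrite // -eu -ev. Qed.

Lemma leM_trans (v u w : W) : leM u v -> leM v w -> leM u w.
Proof.
move=> [e [ide uev]] [f [idf vfw]]; exists (e ++ f); split; first exact: idem_cat.
by rewrite uev vfw catA; reflexivity.
Qed.

Lemma leM_cat (a b c d : W) : leM a b -> leM c d -> leM (a ++ c) (b ++ d).
Proof.
move=> [e [ide aeb]] [f [idf cfd]].
exists (e ++ b ++ f ++ winv b); split; first by apply/idem_cat/idem_conj.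
have bf : Meq (b ++ f) ((b ++ f ++ winv b) ++ b).
  by rewrite -!catA (idem_comm idf (idem_Vcat b)) catA Meq_inv1; reflexivity.
by rewrite aeb cfd -!catA (catA b f) bf -!catA; reflexivity.
Qed.

Lemma leM_winv (a b : W) : leM a b -> leM (winv a) (winv b).
Proof.
move=> [e [ide aeb]]; exists (winv b ++ e ++ b); split.
  by have := idem_conj (winv b) ide; rewrite winvK.
rewrite aeb winv_cat (idem_winv ide) -{1}(Meq_inv1 (winv b)) winvK -!catA.
by rewrite (catA b) -(idem_comm ide (idem_catV b)); reflexivity.
Qed.

Lemma idem_leM_nil (e : W) : idem e -> leM e [::].
Proof. by move=> ide; exists e; split; rewrite ?cats0 //; reflexivity. Qed.

Lemma leM_idem_infix (x y z : W) : idem x -> idem y -> idem z -> leM (x ++ y ++ z) y.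
Proof.
move=> idx idy idz; exists (x ++ z); split; first exact: idem_cat.
by rewrite (idem_comm idy idz) catA; reflexivity.
Qed.

Lemma leM_drop_idem (x e y : W) : idem e -> leM (x ++ e ++ y) (x ++ y).
Proof.
move=> ide; apply: leM_cat; first exact: leM_refl.
by rewrite -[y in leM _ y]cat0s; apply: leM_cat; [exact: idem_leM_nil | exact: leM_refl].
Qed.

Lemma idem_leM_cat (r s t : W) : idem r -> leM r s -> leM r t -> leM r (s ++ t).
Proof. by move=> idr rs rt; apply: leM_Meq (leM_cat rs rt) => //; reflexivity. Qed.

Lemma idem_leM_catV (r w : W) : idem r -> leM r w -> leM r (w ++ winv w).
Proof.
move=> idr rw; apply: leM_Meq (leM_cat rw (leM_winv rw)); last by reflexivity.
by rewrite (idem_winv idr).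
Qed.

Lemma idem_leM_Vcat (r w : W) : idem r -> leM r w -> leM r (winv w ++ w).
Proof.
move=> idr rw; apply: leM_Meq (leM_cat (leM_winv rw) rw); last by reflexivity.
by rewrite (idem_winv idr).
Qed.

End InverseMonoid.

Section Triangles.
Variable B : ssset.
Notation W := (word B).

Definition cellw m (s : cell B m.+2) : W := [:: (Gen m.+1 s, false)].
Definition edgew m (s : cell B m.+2) a b : W := [:: (Gen 0 (edge s a b), false)].
Definition spokew m (s : cell B m.+2) v : W := if v is 0 then [::] else edgew s 0 v.
Definition trianglew m (s : cell B m.+2) a b : W :=
  spokew s a ++ edgew s a b ++ winv (spokew s b).

Lemma idem_cellw m (s : cell B m.+2) : idem (cellw s).
Proof. exact: Meq_idem. Qed.

Lemma cellw_leM_bl m (s : cell B m.+2) : leM (cellw s) (bl s).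
Proof. by exists (cellw s); split; [exact: idem_cellw | exact: Meq_bl]. Qed.

Lemma cellw_leM_face m (s : cell B m.+3) i : 0 < i <= m.+3 ->
  leM (cellw s) (cellw (face B m.+2 i s)).
Proof.
move=> lti; apply: leM_trans (cellw_leM_bl s) _ => /=.
have /splitPr [l1 l2] : i \in rev (iota 1 m.+3) by rewrite mem_rev mem_iota; lia.
rewrite map_cat -catA /=; apply: (leM_idem_infix (y := cellw _)).
- by apply: idem_map_gen => j; apply: Meq_idem.
- exact: idem_cellw.
- apply: idem_cat; first by apply: idem_map_gen => j; apply: Meq_idem.
  by have := idem_conj (edgew s 0 1) (idem_cellw (face B m.+2 0 s)).
Qed.

Lemma cellw_leM_triangle2 (s : cell B 2) a b : a < b <= 2 ->
  leM (cellw s) (trianglew s a b).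
Proof.
move=> ltab; have rbl := cellw_leM_bl s.
have [[-> ->]|[[-> ->]|[-> ->]]] : 
    (a = 0 /\ b = 1) \/ (a = 0 /\ b = 2) \/ (a = 1 /\ b = 2) by lia.
- apply: leM_trans (idem_leM_catV (idem_cellw s) rbl) _.
  exact: (leM_drop_idem [:: _] [:: _] (idem_catV [:: _; (Gen 0 (edge s 0 2), true)])).
- apply: leM_trans (idem_leM_Vcat (idem_cellw s) rbl) _.
  exact: (leM_drop_idem [:: _] [:: _] (idem_Vcat [:: (Gen 0 (edge s 0 1), false); _])).
- exact: rbl.
Qed.

Lemma trianglew_face m (s : cell B m.+3) i a b : 0 < i <= m.+3 -> i != a -> i != b ->
  a < b <= m.+3 -> trianglew (face B m.+2 i s) (unbump i a) (unbump i b) = trianglew s a b.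
Proof.
move=> lti nia nib ltab.
have spoke_face v : v != i -> v <= m.+3 -> spokew (face B m.+2 i s) (unbump i v) = spokew s v.
  case: v => [|v] niv lev; first by rewrite unbumpE ltn0.
  have [w unbump_v] : exists w, unbump i v.+1 = w.+1 by exists (unbump i v.+1).-1; arith.
  rewrite unbump_v /spokew /edgew (@edge_face _ _ s i 0 v.+1) //; try lia.
  by rewrite unbump_v [unbump i 0]unbumpE ltn0.
rewrite /trianglew !spoke_face //; try lia.
by rewrite /edgew -edge_face //; lia.
Qed.

Lemma cellw_leM_triangle m (s : cell B m.+2) a b : a < b <= m.+2 ->
  leM (cellw s) (trianglew s a b).
Proof.
elim: m s a b => [|m IH] s a b ltab; first exact: cellw_leM_triangle2.
have [i [lti nia nib]] : exists i, [/\ 0 < i <= 3, i != a & i != b].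
  by exists (if (a != 1) && (b != 1) then 1 else if (a != 2) && (b != 2) then 2 else 3);
    case: ifP => ?; [|case: ifP => ?]; split; lia.
apply: (@leM_trans _ (cellw (face B m.+2 i s))); first by apply: cellw_leM_face; lia.
rewrite -(trianglew_face s _ nia nib); try lia.
by apply: IH; arith.
Qed.

End Triangles.

Lemma cellw_leM_path (C B : ssset) (f : ssmap C B) m (c : cell C m.+2) q x :
  x <= m.+2 -> path (fun a b => (a != b) && (b <= m.+2)) x q ->
  leM (cellw (smap f c))
    (spokew (smap f c) x ++ flatten (pairmap (step_word f c) x q)
       ++ winv (spokew (smap f c) (last x q))).
Proof.
set s := smap f c; have ids := idem_cellw s.
elim: q x => [|y q IH] x lex.
  by case: x lex => [|x] lex _; [exact: idem_leM_nil | exact: (@cellw_leM_triangle _ _ s 0 x.+1 lex)].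
case/andP => /andP [nxy ley] pq.
have step : leM (cellw s) (spokew s x ++ step_word f c x y ++ winv (spokew s y)).
  rewrite /step_word !smap_edge; case: ltngtP nxy => // [ltxy|ltyx] _.
    by apply: cellw_leM_triangle; rewrite ltxy.
  have := leM_winv (@cellw_leM_triangle _ _ s y x _); rewrite ltyx lex => /(_ isT).
  rewrite /trianglew !winv_cat winvK -catA; apply: leM_Meq; last by reflexivity.
  exact: idem_winv.
apply: leM_trans (idem_leM_cat ids step (IH y ley pq)) _.
have := leM_drop_idem (spokew s x ++ step_word f c x y)
  (flatten (pairmap (step_word f c) y q) ++ winv (spokew s (last y q))) (idem_Vcat (spokew s y)).
by rewrite -!catA.
Qed.

Theorem mainTheorem6
  (B : ssset) (n : nat)
  (HB0 : exists b : cell B 0, forall x : cell B 0, x = b)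
  (HBn : forall k : nat, n < k -> cell B k -> False)
  (C : ssset) (f : ssmap C B) (Himm : immersion f)
  (k : nat) (c : cell C k.+2) (q : seq nat)
  (Hq : closed_path k.+2 q) :
  leM (cell_word f c) (path_word f c q).
Proof.
case/andP: Hq => pq /eqP lastq.
by have := cellw_leM_path f c (leq0n _) pq; rewrite lastq /= cats0.
Qed.
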